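(* For all integers $\mu_1,\mu_2\ge0$ and $i,j,k,m\ge0$: if $\omega_i+\omega_j+\omega_k-\omega_m=0$, or $\omega_i+\omega_j-\omega_k+\omega_m=0$, or $\omega_i-\omega_j+\omega_k+\omega_m=0$, or $-\omega_i+\omega_j+\omega_k+\omega_m=0$ (with $\omega_n=\omega_n^{(\mu_1,\mu_2)}$), then $\mathsf{C}^{(\mu_1,\mu_2)}_{ijkm}=0$.
   Context: $\omega_n^{(\mu_1,\mu_2)}=2n+1+\mu_1+\mu_2$. $\mathsf{e}_n(x)=\mathsf{N}_n(1-\cos2x)^{\mu_1/2}(1+\cos2x)^{\mu_2/2}P_n^{(\mu_1,\mu_2)}(\cos2x)$ with $P_n^{(\mu_1,\mu_2)}$ Jacobi polynomials and $\mathsf{N}_n=\sqrt{\frac{\omega_n}{2^{\mu_1+\mu_2}}\frac{\Gamma(n+1)\Gamma(n+\mu_1+\mu_2+1)}{\Gamma(n+\mu_1+1)\Gamma(n+\mu_2+1)}}$; $\mathsf{C}^{(\mu_1,\mu_2)}_{ijkm}=\int_0^{\pi/2}\mathsf{e}_i\mathsf{e}_j\mathsf{e}_k\mathsf{e}_m\sin(2x)\,dx$. *)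

From Stdlib Require Import Reals Arith Factorial.
From Coquelicot Require Import Coquelicot.
Open Scope R_scope.

Definition omega (mu1 mu2 n : nat) : R := INR (2 * n + 1 + mu1 + mu2).

Definition jacobiP (a b n : nat) (z : R) : R :=
  sum_f_R0 (fun s => Binomial.C (n + a) (n - s) * Binomial.C (n + b) s
                     * ((z - 1) / 2) ^ s * ((z + 1) / 2) ^ (n - s)) n.

(* Gamma(m+1) = m! for natural m *)
Definition normN (mu1 mu2 n : nat) : R :=
  sqrt (omega mu1 mu2 n / 2 ^ (mu1 + mu2)
        * (INR (fact n) * INR (fact (n + mu1 + mu2)))
        / (INR (fact (n + mu1)) * INR (fact (n + mu2)))).

(* e_n(x) = N_n (1 - cos 2x)^{mu1/2} (1 + cos 2x)^{mu2/2} P_n(cos 2x);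
   for the nonnegative bases, t^{mu/2} = (sqrt t)^mu. *)
Definition eJ (mu1 mu2 n : nat) (x : R) : R :=
  normN mu1 mu2 n * sqrt (1 - cos (2 * x)) ^ mu1 * sqrt (1 + cos (2 * x)) ^ mu2
  * jacobiP mu1 mu2 n (cos (2 * x)).

Definition Ccoef (mu1 mu2 i j k m : nat) : R :=
  RInt (fun x => eJ mu1 mu2 i x * eJ mu1 mu2 j x * eJ mu1 mu2 k x * eJ mu1 mu2 m x
                 * sin (2 * x)) 0 (PI / 2).

(* With z = cos 2x, each e_n is a constant times (1 - z)^(mu1/2) (1 + z)^(mu2/2) P_n(z),
   and sin 2x dx = -dz/2.  By the Rodrigues formula, w P_m with w = (z - 1)^mu1 (z + 1)^mu2
   is, up to a constant, the m-th derivative of F = (z - 1)^(m + mu1) (z + 1)^(m + mu2),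
   so the integrand is F^(m)(z) Q(z) with Q = w P_i P_j P_k.  The condition
   omega_i + omega_j + omega_k = omega_m says exactly that deg Q = m - 1, so m integrations
   by parts turn the integral into boundary terms, which vanish because F has roots of
   order m at z = 1 and z = -1.  The three other conditions reduce to this one by
   permuting the indices.  No change of variables is needed: if A' = F^(m) Q, then
   x |-> -A(cos 2x)/2 is, up to the same constant, a primitive of the integrand. *)

From Stdlib Require Import Reals Lra Lia Factorial.
From Coquelicot Require Import Coquelicot.
From mathcomp Require Import all_boot all_algebra zify Rstruct.
Set Implicit Arguments. Unset Strict Implicit. Unset Printing Implicit Defensive.
Import GRing.Theory.
Local Open Scope ring_scope.

Section Leibniz.
Variable R : nzSemiRingType.
Implicit Types p q : {poly R}.

Lemma derivnM p q n :
  (p * q)^`(n) = \sum_(t < n.+1) (p^`(t) * q^`(n - t)) *+ 'C(n, t).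
Proof.
elim: n => [|n IHn]; first by rewrite big_ord1 !derivn0 bin0 mulr1n.
rewrite derivnS IHn raddf_sum /=.
set A := \sum_(t < n.+1) (p^`(t.+1) * q^`(n - t)) *+ 'C(n, t.+1).
set B := \sum_(t < n.+1) (p^`(t.+1) * q^`(n - t)) *+ 'C(n, t).
set C := \sum_(t < n.+1) (p^`(t) * q^`((n - t).+1)) *+ 'C(n, t).
have -> : \sum_(t < n.+1) ((p^`(t) * q^`(n - t)) *+ 'C(n, t))^`() = B + C.
  rewrite -big_split; apply: eq_bigr => t _.
  by rewrite derivMn derivM -!derivnS mulrnDl.
have -> : C = p * q^`(n.+1) + A.
  rewrite /C big_ord_recl subn0 bin0 mulr1n; congr (_ + _).
  rewrite /A [RHS]big_ord_recr /= bin_small // mulr0n addr0.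
  apply: eq_bigr => t _; rewrite /bump add1n add0n -!derivnS.
  by rewrite subnSK.
rewrite [RHS]big_ord_recl bin0 mulr1n subn0 addrCA; congr (_ + _).
rewrite addrC /A /B -big_split; apply: eq_bigr => t _.
by rewrite /= subSS binS mulrnDr addrC.
Qed.

End Leibniz.

Section Rodrigues.
Variable R : comNzRingType.

Lemma derivn_exp_XsubC (c : R) N t :
  (('X - c%:P) ^+ N)^`(t) = ('X - c%:P) ^+ (N - t) *+ N ^_ t.
Proof.
elim: t => [|t IHt]; first by rewrite derivn0 subn0 ffactn0 mulr1n.
rewrite derivnS IHt derivMn deriv_exp derivXsubC mul1r ffactnSr.
by rewrite mulnC mulrnA subnS.
Qed.

Local Notation Xm1 := ('X - 1%:P : {poly R}).
Local Notation Xp1 := ('X - (-1)%:P : {poly R}).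

Variables a b : nat.

Definition jacobi_weight : {poly R} := Xm1 ^+ a * Xp1 ^+ b.

Definition jacobi_poly n : {poly R} :=
  \sum_(s < n.+1) (Xm1 ^+ s * Xp1 ^+ (n - s)) *+ ('C(n + a, n - s) * 'C(n + b, s)).

Definition rodrigues_poly m : {poly R} := Xm1 ^+ (m + a) * Xp1 ^+ (m + b).

Lemma derivn_rodrigues_poly m k : (rodrigues_poly m)^`(k) = \sum_(t < k.+1)
  (Xm1 ^+ (m + a - t) * Xp1 ^+ (m + b - (k - t))) *+ ((m + a) ^_ t * (m + b) ^_ (k - t) * 'C(k, t)).
Proof.
rewrite /rodrigues_poly derivnM; apply: eq_bigr => t _.
by rewrite !derivn_exp_XsubC mulrnAl mulrnAr -!mulrnA mulnCA mulnA.
Qed.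

Lemma derivn_rodrigues_poly_root1 m k : (k < m)%N -> ((rodrigues_poly m)^`(k)).[1] = 0.
Proof.
move=> lt_km; rewrite derivn_rodrigues_poly horner_sum big1 // => t _.
rewrite hornerMn hornerM horner_exp hornerXsubC subrr expr0n.
have -> : (m + a - t == 0)%N = false by apply/negbTE; have := ltn_ord t; lia.
by rewrite mul0r mul0rn.
Qed.

Lemma derivn_rodrigues_poly_rootN1 m k : (k < m)%N -> ((rodrigues_poly m)^`(k)).[-1] = 0.
Proof.
move=> lt_km; rewrite derivn_rodrigues_poly horner_sum big1 // => t _.
rewrite hornerMn hornerM [X in _ * X]horner_exp hornerXsubC subrr expr0n.
have -> : (m + b - (k - t) == 0)%N = false by apply/negbTE; have := ltn_ord t; lia.
by rewrite mulr0 mul0rn.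
Qed.

Lemma rodrigues_formula m :
  (rodrigues_poly m)^`(m) = jacobi_weight * jacobi_poly m *+ m`!.
Proof.
rewrite derivn_rodrigues_poly /jacobi_poly mulr_sumr -sumrMnl.
rewrite (reindex_inj rev_ord_inj) /=; apply: eq_bigr => t _; rewrite subSS.
have le_tm : (t <= m)%N by have := ltn_ord t; lia.
have -> : (m + a - (m - t) = a + t)%N by lia.
have -> : (m - (m - t) = t)%N by lia.
have -> : (m + b - t = b + (m - t))%N by lia.
rewrite !exprD mulrnAr -mulrnA; congr (_ *+ _).
  by rewrite /jacobi_weight -!mulrA (mulrCA (Xm1 ^+ t)).
rewrite -(bin_ffact (m + a)) -(bin_ffact (m + b)) -(bin_fact le_tm) bin_sub //.
move: 'C(m + b, t) 'C(m + a, m - t) 'C(m, t) t`! (m - t)`! => x1 x2 x3 x4 x5; nia.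
Qed.

Lemma size_mul_leqS (p q : {poly R}) m n :
  (size p <= m.+1)%N -> (size q <= n.+1)%N -> (size (p * q)%R <= (m + n).+1)%N.
Proof. by move=> sp sq; rewrite (leq_trans (size_polyMleq _ _)) //; lia. Qed.

Lemma size_jacobi_poly n : (size (jacobi_poly n) <= n.+1)%N.
Proof.
rewrite /jacobi_poly; apply: (big_ind (fun p : {poly R} => size p <= n.+1)%N).
- by rewrite size_poly0.
- by move=> p q sp sq; rewrite (leq_trans (size_polyD p q)) // geq_max sp sq.
move=> s _; rewrite -scaler_nat (leq_trans (size_scale_leq _ _)) //.
rewrite (leq_trans (size_mul_leqS (m := s) (n := n - s) _ _)) ?size_exp_XsubC //.
by have := ltn_ord s; lia.
Qed.

Lemma size_weight_jacobi3 i j k :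
  (size (jacobi_weight * jacobi_poly i * jacobi_poly j * jacobi_poly k)%R
     <= (a + b + i + j + k).+1)%N.
Proof.
by rewrite /jacobi_weight; repeat apply: size_mul_leqS; rewrite ?size_jacobi_poly ?size_exp_XsubC.
Qed.

End Rodrigues.

Section RepeatedIntegrationByParts.
Variable R : comNzRingType.
Implicit Types F Q : {poly R}.

Fixpoint ibp_antiderivative F Q n : {poly R} :=
  if n is n'.+1 then F^`(n') * Q - ibp_antiderivative F Q^`() n' else 0.

Lemma deriv_ibp_antiderivative F Q n :
  (ibp_antiderivative F Q n)^`() = F^`(n) * Q - (-1) ^+ n * (F * Q^`(n)).
Proof.
elim: n Q => [|n IHn] Q /=; first by rewrite deriv0 expr0 mul1r subrr.
rewrite derivB derivM IHn -!derivnS -derivSn exprS mulN1r mulNr opprK opprB.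
by rewrite -addrA; congr (_ + _); rewrite addrC subrK.
Qed.

Lemma deriv_ibp_antiderivative_small F Q n : (size Q <= n)%N ->
  (ibp_antiderivative F Q n)^`() = F^`(n) * Q.
Proof. by move=> sQ; rewrite deriv_ibp_antiderivative (derivn_poly0 sQ) !mulr0 subr0. Qed.

Lemma horner_ibp_antiderivative_eq0 F Q n x :
  (forall k, (k < n)%N -> (F^`(k)).[x] = 0) -> (ibp_antiderivative F Q n).[x] = 0.
Proof.
elim: n Q => [|n IHn] Q vanish /=; first by rewrite horner0.
rewrite hornerD hornerN IHn => [|k lt_kn]; last by apply: vanish; lia.
by rewrite hornerM vanish // mul0r subr0.
Qed.

End RepeatedIntegrationByParts.

Close Scope ring_scope.
Open Scope R_scope.

Lemma binomial_C_INR N K : (K <= N)%N -> Binomial.C N K = INR 'C(N, K).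
Proof.
move=> le_KN; rewrite /Binomial.C.
have -> : INR (fact N) = INR 'C(N, K) * (INR (fact K) * INR (fact (N - K))).
  by rewrite !factE -(bin_fact le_KN) -!multE !mult_INR.
change (N - K)%coq_nat with (N - K)%N; field; split; apply: INR_fact_neq_0.
Qed.

Lemma horner_jacobi_weight a b z :
  (jacobi_weight R a b).[z]%R = (z - 1) ^ a * (z + 1) ^ b.
Proof.
rewrite hornerM !horner_exp !hornerXsubC -!RpowE -!RmultE -!RminusE -!RoppE.
by rewrite /Rminus Ropp_involutive.
Qed.

Lemma horner_jacobi_poly a b n z :
  (jacobi_poly R a b n).[z]%R = 2 ^ n * jacobiP a b n z.
Proof.
rewrite /jacobiP sum_f_R0E big_mkord horner_sum RmultE mulr_sumr; apply: (@eq_bigr R) => s _.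
have le_sn : (s <= n)%N by have := ltn_ord s; lia.
rewrite hornerMn hornerM !horner_exp !hornerXsubC -mulr_natr natrM.
rewrite (@binomial_C_INR (n + a) (n - s)); last by lia.
rewrite (@binomial_C_INR (n + b) s); last by lia.
rewrite -!INRE -!RpowE -!RmultE -!RminusE -!RoppE /Rminus Ropp_involutive.
rewrite -R1E; change (n - s)%coq_nat with (n - s)%N.
have -> : 2 ^ n = 2 ^ s * 2 ^ (n - s)%N by rewrite -pow_add; congr pow; lia.
have h2s : 2 ^ s <> 0 by apply: pow_nonzero; lra.
have h2ns : 2 ^ (n - s)%N <> 0 by apply: pow_nonzero; lra.
by rewrite /Rdiv !Rpow_mult_distr !pow_inv; field.
Qed.

Lemma is_derive_horner (p : {poly R}) y : is_derive (horner p) y (p^`()).[y]%R.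
Proof.
elim/poly_ind: p => [|p c IHp].
  rewrite deriv0 horner0; apply: (is_derive_ext (fun _ => 0)) (is_derive_const 0 y).
  by move=> t; rewrite horner0.
apply: (is_derive_ext (fun t => p.[t]%R * t + c)) => [t|].
  by rewrite hornerMXaddC.
rewrite derivMXaddC.
have -> : (p + p^`() * 'X).[y]%R = plus (plus (mult (p^`()).[y]%R y) (mult p.[y]%R 1)) 0 :> R.
  rewrite hornerD hornerM hornerX -RmultE -RplusE /Hierarchy.plus /Hierarchy.mult /=.
  (* [set] identifies the two differently elaborated copies of [p^`().[y]]. *)
  by set u := (p^`()).[y]%R; ring.
apply: is_derive_plus (is_derive_const c y).
exact: is_derive_mult IHp (is_derive_id y) Rmult_comm.
Qed.

Lemma is_derive_horner_cos2 (p : {poly R}) x :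
  is_derive (fun x => horner p (cos (2 * x))) x
    (- (2 * sin (2 * x)) * horner p^`() (cos (2 * x))).
Proof.
apply: (is_derive_comp (horner p)); first exact: is_derive_horner.
by auto_derive => //; ring.
Qed.

Lemma RInt_deriv_horner_cos2 (p : {poly R}) :
  RInt (fun x => horner p^`() (cos (2 * x)) * sin (2 * x)) 0 (PI / 2)
  = (p.[1]%R - p.[-1]%R) / 2.
Proof.
pose g x := - / 2 * horner p (cos (2 * x)).
have g' x : is_derive g x (horner p^`() (cos (2 * x)) * sin (2 * x)).
  have := is_derive_scal _ x (- / 2) _ (is_derive_horner_cos2 p x).
  suff -> : horner p^`() (cos (2 * x)) * sin (2 * x)
            = - / 2 * (- (2 * sin (2 * x)) * horner p^`() (cos (2 * x))) by [].
  by field.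
have cont x : continuous (fun x => horner p^`() (cos (2 * x)) * sin (2 * x)) x.
  apply: continuous_mult; apply: ex_derive_continuous.
    by eexists; apply: is_derive_horner_cos2.
  by auto_derive.
rewrite (is_RInt_unique _ _ _ _ (is_RInt_derive g _ 0 (PI / 2) (fun x _ => g' x) (fun x _ => cont x))).
have cos0 : cos (2 * 0) = 1%R by rewrite Rmult_0_r cos_0.
have cosPI : cos (2 * (PI / 2)) = (-1)%R by rewrite (_ : 2 * (PI / 2) = PI) ?cos_PI //; field.
rewrite /minus /Hierarchy.plus /Hierarchy.opp /= /g cos0 cosPI.
by set u := p.[1]%R; set v := p.[-1]%R; field.
Qed.

Lemma eJ_jacobi_poly a b n x :
  eJ a b n x = normN a b n / 2 ^ n
    * (sqrt (1 - cos (2 * x)) ^ a * sqrt (1 + cos (2 * x)) ^ b)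
    * (jacobi_poly R a b n).[cos (2 * x)]%R.
Proof.
have := pow_nonzero 2 n; rewrite /eJ horner_jacobi_poly => ?; field; lra.
Qed.

Lemma pow_sqrt_pow4 t n : 0 <= t -> (sqrt t ^ n) ^ 4 = (t ^ n) ^ 2.
Proof. by move=> t_ge0; rewrite -{2}(pow2_sqrt t t_ge0) -!pow_mult; congr pow; lia. Qed.

Lemma sqrt_jacobi_weight_pow4 a b z : -1 <= z <= 1 ->
  (sqrt (1 - z) ^ a * sqrt (1 + z) ^ b) ^ 4 = (jacobi_weight R a b).[z]%R ^ 2.
Proof.
move=> z_bound; rewrite horner_jacobi_weight !Rpow_mult_distr !pow_sqrt_pow4; try lra.
rewrite -!pow_mult !(Nat.mul_comm _ 2) !pow_mult (Rplus_comm 1 z).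
by congr (_ ^ a * _); ring.
Qed.

Lemma eJ4_horner a b i j k m x :
  eJ a b i x * eJ a b j x * eJ a b k x * eJ a b m x =
  normN a b i * normN a b j * normN a b k * normN a b m / 2 ^ (i + j + k + m)
  * (jacobi_weight R a b * jacobi_poly R a b m
     * (jacobi_weight R a b * jacobi_poly R a b i * jacobi_poly R a b j
        * jacobi_poly R a b k)).[cos (2 * x)]%R.
Proof.
have := sqrt_jacobi_weight_pow4 a b (COS_bound (2 * x)).
(* Generalizing the weight keeps [hornerM] from unfolding it. *)
rewrite !eJ_jacobi_poly; move: (jacobi_weight R a b) => W.
rewrite !hornerM -!RmultE !pow_add.
set z := cos (2 * x); set s := _ * _ ^ b; set w := W.[z]%R.
set Pi := (jacobi_poly R a b i).[z]%R; set Pj := (jacobi_poly R a b j).[z]%R.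
set Pk := (jacobi_poly R a b k).[z]%R; set Pm := (jacobi_poly R a b m).[z]%R.
have pow2_neq0 n : 2 ^ n <> 0 by apply: pow_nonzero; lra.
move=> s4; transitivity (normN a b i * normN a b j * normN a b k * normN a b m
  / (2 ^ i * 2 ^ j * 2 ^ k * 2 ^ m) * s ^ 4 * Pi * Pj * Pk * Pm).
  by field; repeat split; apply: pow2_neq0.
by rewrite s4; field; repeat split; apply: pow2_neq0.
Qed.

Lemma Ccoef_resonant_eq0 a b i j k m : m = (a + b + i + j + k).+1 -> Ccoef a b i j k m = 0.
Proof.
move=> m_eq.
pose Q := (jacobi_weight R a b * jacobi_poly R a b i * jacobi_poly R a b j
           * jacobi_poly R a b k)%R.
pose A := ibp_antiderivative (rodrigues_poly R a b m) Q m.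
have dA : (A^`() = jacobi_weight R a b * jacobi_poly R a b m * Q *+ m`!)%R.
  by rewrite deriv_ibp_antiderivative_small ?rodrigues_formula ?mulrnAl // m_eq size_weight_jacobi3.
have A1 : A.[1]%R = 0.
  by apply: horner_ibp_antiderivative_eq0 => n; apply: derivn_rodrigues_poly_root1.
have AN1 : A.[-1]%R = 0.
  by apply: horner_ibp_antiderivative_eq0 => n; apply: derivn_rodrigues_poly_rootN1.
pose c := normN a b i * normN a b j * normN a b k * normN a b m
          / (2 ^ (i + j + k + m) * INR (fact m)).
have integrand x : eJ a b i x * eJ a b j x * eJ a b k x * eJ a b m x * sin (2 * x)
                   = horner (c *: A)^`()%R (cos (2 * x)) * sin (2 * x).
  rewrite eJ4_horner derivZ hornerZ dA hornerMn -mulr_natr -INRE -RmultE -factE /c /Q.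
  set P := horner _ (cos (2 * x)).
  have := INR_fact_neq_0 m; have := pow_nonzero 2 (i + j + k + m).
  by rewrite -RmultE => ? ?; field; split => //; lra.
rewrite /Ccoef (RInt_ext _ _ _ _ (fun x _ => integrand x)) RInt_deriv_horner_cos2.
by rewrite !hornerZ A1 AN1 -!RmultE; field.
Qed.

Lemma Ccoef_rot a b i j k m : Ccoef a b i j k m = Ccoef a b j k m i.
Proof.
have integrand x : eJ a b i x * eJ a b j x * eJ a b k x * eJ a b m x * sin (2 * x)
                   = eJ a b j x * eJ a b k x * eJ a b m x * eJ a b i x * sin (2 * x).
  by ring.
exact: RInt_ext (fun x _ => integrand x).
Qed.

Lemma omega_resonance a b i j k m :
  omega a b i + omega a b j + omega a b k = omega a b m -> m = (a + b + i + j + k).+1.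
Proof. by rewrite /omega -!plus_INR => /INR_eq; lia. Qed.

Theorem lemma5p3 (mu1 mu2 i j k m : nat) :
  (omega mu1 mu2 i + omega mu1 mu2 j + omega mu1 mu2 k - omega mu1 mu2 m = 0 \/
   omega mu1 mu2 i + omega mu1 mu2 j - omega mu1 mu2 k + omega mu1 mu2 m = 0 \/
   omega mu1 mu2 i - omega mu1 mu2 j + omega mu1 mu2 k + omega mu1 mu2 m = 0 \/
   - omega mu1 mu2 i + omega mu1 mu2 j + omega mu1 mu2 k + omega mu1 mu2 m = 0) ->
  Ccoef mu1 mu2 i j k m = 0.
Proof.
case=> [H|[H|[H|H]]]; [|rewrite 3!Ccoef_rot|rewrite 2!Ccoef_rot|rewrite Ccoef_rot];
  by apply/Ccoef_resonant_eq0/omega_resonance; lra.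
Qed.
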